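(* Let $A\in\mathbb Q^{n\times n}$, $X_0\in\mathbb Q^n$ with $X_0(1)=0$, $C=[1,\mathbf 0_{n-1}]$. Define $\lambda:=\max_i\sum_{j=1}^n|A_{ij}|+1$, $P_2:=\phi_1(A)-\lambda I_{2n}$, $Y_2:=\phi_2(X_0)$, the vector $\boldsymbol\beta\in\mathbb Q^{2n}$ by $\boldsymbol\beta(2i-1)=\boldsymbol\beta(2i)=\max(0,-(P_2Y_2)(2i-1),-(P_2Y_2)(2i))$ for $1\le i\le n$, and $\gamma:=\max_i\big((P_2Y_2)(i)+\boldsymbol\beta(i)\big)$; assume $\gamma>0$. Let $$P:=\begin{bmatrix}P_2&(P_2Y_2+\boldsymbol\beta)/\gamma\\ \mathbf 0_{2n}&0\end{bmatrix}\in\mathbb Q^{(2n+1)\times(2n+1)}.$$ Then for all $t$, $Ce^{At}X_0=\gamma e^{\lambda t}\,C'e^{Pt}Y_0$ with $C'=[1,-1,\mathbf 0_{2n-1}]$ and $Y_0=[\mathbf 0_{2n},1]^T$. Moreover $P$ has nonnegative off-diagonal entries and every row sum of $P$ is $\le0$.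
   Context: $\phi_1(A)\in\mathbb Q_{\ge0}^{2n\times2n}$ is obtained from $A$ by replacing each entry $A_{ij}$ by the $2\times2$ block $\begin{bmatrix}\alpha_{ij}&\beta_{ij}\\\beta_{ij}&\alpha_{ij}\end{bmatrix}$, where $\alpha_{ij}=\max(A_{ij},0)$, $\beta_{ij}=\max(-A_{ij},0)$. $\phi_2(X)\in\mathbb Q^{2n}$ replaces each entry $X(i)$ of $X\in\mathbb Q^n$ by the two entries $X(i),0$. $\mathbf 0_m$ is the zero row vector of length $m$; $I_{2n}$ is the identity. *)

From HB Require Import structures.
From mathcomp Require Import all_boot all_order all_algebra.
From mathcomp Require Import all_classical all_reals all_analysis.
Set Implicit Arguments. Unset Strict Implicit. Unset Printing Implicit Defensive.
Import Order.TTheory GRing.Theory Num.Theory.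
Import numFieldNormedType.Exports.
Local Open Scope ring_scope.

Definition mexp (R : realType) (k : nat) (M : 'M[R]_k) (t : R) : 'M[R]_k :=
  \matrix_(i, j) limn (fun N : nat =>
     ((\sum_(m < N) ((t ^+ m / (m`!)%:R) *: M ^+ m)) i j : R)).

(* phi_1 : each entry A_ij becomes [[alpha, beta],[beta, alpha]];
   index p (0-based) of the 2n-dim space belongs to block p/2, and
   position inside the block is given by the parity of p. *)
Definition phi1 (n : nat) (A : 'M[rat]_n.+1) : 'M[rat]_((n.+1).*2) :=
  \matrix_(p, q)
    (let a := A (inord (p./2)) (inord (q./2)) in
     if odd p == odd q then Num.max a 0 else Num.max (- a) 0).

Definition phi2 (n : nat) (X : 'cV[rat]_n.+1) : 'cV[rat]_((n.+1).*2) :=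
  \col_p (if odd p then 0 else X (inord (p./2)) 0).

Definition lam (n : nat) (A : 'M[rat]_n.+1) : rat :=
  \big[Num.max/ \sum_j `|A ord0 j| ]_(i < n.+1) (\sum_j `|A i j|) + 1.

Definition P2 (n : nat) (A : 'M[rat]_n.+1) : 'M[rat]_((n.+1).*2) :=
  phi1 A - (lam A)%:M.

Definition Y2 (n : nat) (X0 : 'cV[rat]_n.+1) := phi2 X0.

Definition betav (n : nat) (A : 'M[rat]_n.+1) (X0 : 'cV[rat]_n.+1)
  : 'cV[rat]_((n.+1).*2) :=
  let v := P2 A *m Y2 X0 in
  \col_p Num.max 0 (Num.max (- v (inord (p./2).*2) 0)
                            (- v (inord ((p./2).*2).+1) 0)).

Definition wv (n : nat) (A : 'M[rat]_n.+1) (X0 : 'cV[rat]_n.+1) :=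
  P2 A *m Y2 X0 + betav A X0.

Definition gam (n : nat) (A : 'M[rat]_n.+1) (X0 : 'cV[rat]_n.+1) : rat :=
  \big[Num.max/ wv A X0 (inord 0) 0]_(i < (n.+1).*2) wv A X0 i 0.

Definition Pmat (n : nat) (A : 'M[rat]_n.+1) (X0 : 'cV[rat]_n.+1)
  : 'M[rat]_((n.+1).*2 + 1) :=
  block_mx (P2 A) ((gam A X0)^-1 *: wv A X0) 0 0.

Definition Cvec (n : nat) : 'rV[rat]_n.+1 := \row_j ((j == ord0)%:R).

Definition Cpvec (n : nat) : 'rV[rat]_((n.+1).*2 + 1) :=
  \row_j (((j : nat) == 0%N)%:R - ((j : nat) == 1%N)%:R).

Definition Y0vec (n : nat) : 'cV[rat]_((n.+1).*2 + 1) := col_mx 0 1.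

From HB Require Import structures.
From mathcomp Require Import all_boot all_order all_algebra.
From mathcomp Require Import all_classical all_reals all_analysis.
From mathcomp Require Import zify ring lra.
Set Implicit Arguments. Unset Strict Implicit. Unset Printing Implicit Defensive.
Import Order.TTheory GRing.Theory Num.Theory.
Import numFieldNormedType.Exports.
Local Open Scope ring_scope.

(* Write B := A - lambda I.  The exponential series of (B + lambda I) t is
   the Cauchy product of the scalar series of e^{lambda t} with the series
   of e^{Bt}, so C e^{At} X0 = e^{lambda t} C e^{Bt} X0.  Both C e^{Bt} X0
   and C' e^{Pt} Y0 are exponential series of scalar moments u M^m v, so it
   suffices to compare moments: with the folding matrix D, which maps the
   pair (x_{2i}, x_{2i+1}) to x_{2i} - x_{2i+1}, one has D phi_1(A) = A D,
   D phi_2(X0) = X0 and D beta = 0, whence D P2^m = B^m D and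
   C' P^{m+1} Y0 = C D P2^m (P2 Y2 + beta) / gamma = C B^{m+1} X0 / gamma;
   for m = 0 both sides vanish because X0(1) = 0.  The sign conditions on
   P are entrywise: phi_1(A) and P2 Y2 + beta are nonnegative, and
   lambda exceeds every absolute row sum of A by 1, which absorbs the last
   column (P2 Y2 + beta) / gamma, whose entries are at most 1. *)

Section CauchyProduct.
Variable R : realType.
Local Open Scope classical_set_scope.
Implicit Types a b : nat -> R.

Definition cauchy_conv a b (N : nat) : R :=
  \sum_(0 <= k < N.+1) a k * b (N - k)%N.

Definition tri_sum a b (K : nat) : R :=
  \sum_(0 <= k < K) \sum_(0 <= m < K - k) a k * b m.

Lemma series_cauchy_conv a b K : series (cauchy_conv a b) K = tri_sum a b K.
Proof.
rewrite /series /tri_sum /=; elim: K => [|K IH]; first by rewrite !big_geq.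
rewrite big_nat_recr //= IH /cauchy_conv big_nat_recr //= [in RHS]big_nat_recr //=.
rewrite subnn subSnn big_nat1 addrA; congr (_ + _).
rewrite -big_split /=; apply: eq_big_nat => k /andP[_ kK].
by rewrite subSn ?(ltnW kK) // big_nat_recr.
Qed.

Lemma series_mul_sub_tri a b K :
  series a K * series b K - tri_sum a b K =
  \sum_(0 <= k < K) a k * \sum_((K - k)%N <= m < K) b m.
Proof.
rewrite /series /tri_sum /= big_distrl /= -sumrB; apply: eq_bigr => k _.
rewrite mulrC big_distrr /= -big_distrr /=.
rewrite [X in X * a k](@big_cat_nat _ _ _ (K - k)) ?leq_subr //= mulrDl.
rewrite addrAC (mulrC _ (a k)) subrr add0r big_distrl /=.
by apply: eq_bigr => i _; exact: mulrC.
Qed.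

Section Nonnegative.
Variables a b : nat -> R.
Hypotheses (a_ge0 : forall k, 0 <= a k) (b_ge0 : forall k, 0 <= b k).

(* For nonnegative terms the triangle k + m < K sits inside the square
   [0,K)^2, which sits inside the triangle k + m < 2K. *)
Lemma tri_sum_le_mul K : tri_sum a b K <= series a K * series b K.
Proof.
rewrite -subr_ge0 series_mul_sub_tri; apply: sumr_ge0 => k _.
by apply: mulr_ge0 => //; apply: sumr_ge0.
Qed.

Lemma mul_le_tri_sum_double K :
  series a K * series b K <= tri_sum a b (2 * K)%N.
Proof.
rewrite /series /tri_sum /= big_distrl /=.
rewrite (@big_cat_nat _ _ _ K 0 (2 * K)) ?leq_pmull //=.
rewrite -[X in X <= _]addr0 lerD //; last first.
  by apply: sumr_ge0 => k _; apply: sumr_ge0 => m _; apply: mulr_ge0.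
apply: ler_sum_nat => k /andP[_ kK].
rewrite big_distrr /= (@big_cat_nat _ _ _ K 0 (2 * K - k)) //=; last by lia.
by rewrite lerDl; apply: sumr_ge0 => m _; apply: mulr_ge0.
Qed.

(* Hence, when both series converge, the triangular sums increase to a
   finite limit and the square and the triangle become indistinguishable. *)
Lemma mul_sub_tri_sum_cvg0 : cvgn (series a) -> cvgn (series b) ->
  (fun K => series a K * series b K - tri_sum a b K) @ \oo --> 0.
Proof.
move=> ca cb.
have tri_nd : nondecreasing_seq (tri_sum a b).
  move=> m p mp; rewrite -!series_cauchy_conv; apply: nondecreasing_series => //.
  by move=> k _ _; apply: sumr_ge0 => i _; apply: mulr_ge0.
have series_le_lim (c : nat -> R) : (forall k, 0 <= c k) -> cvgn (series c) ->
    forall K, series c K <= limn (series c).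
  move=> c_ge0 cc K; apply: nondecreasing_cvgn_le => // m p mp.
  exact: nondecreasing_series.
have tri_cvg : cvgn (tri_sum a b).
  apply: nondecreasing_is_cvgn => //.
  exists (limn (series a) * limn (series b)) => _ [K _ <-].
  apply: (le_trans (tri_sum_le_mul K)).
  by apply: ler_pM; rewrite ?sumr_ge0 ?series_le_lim.
have tri_double_cvg : (fun K => tri_sum a b (2 * K)%N) @ \oo --> limn (tri_sum a b).
  exact: (cvg_comp _ _ (@cvg_mulnl 2 isT) tri_cvg).
have gap_double : (fun K => tri_sum a b (2 * K)%N - tri_sum a b K) @ \oo --> 0.
  by rewrite -(subrr (limn (tri_sum a b))); apply: cvgB.
apply: (@squeeze_cvgr _ _ _ _ (fun=> 0) _ _ _ _ (cvg_cst 0) gap_double).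
near=> K; rewrite subr_ge0 tri_sum_le_mul lerD2r mul_le_tri_sum_double //.
Unshelve. all: by end_near.
Qed.

End Nonnegative.

Lemma cauchy_product a b : cvgn (series (fun k => `|a k|)) ->
  cvgn (series (fun k => `|b k|)) ->
  series (cauchy_conv a b) @ \oo --> limn (series a) * limn (series b).
Proof.
move=> caa cbb.
have ca : cvgn (series a) by exact: (@normed_cvg _ R^o).
have cb : cvgn (series b) by exact: (@normed_cvg _ R^o).
have gap_abs := mul_sub_tri_sum_cvg0 (fun k => normr_ge0 (a k))
  (fun k => normr_ge0 (b k)) caa cbb.
have gap : (fun K => series a K * series b K - series (cauchy_conv a b) K)
    @ \oo --> 0.
  have neg_gap_abs : (fun K => - (series (fun k => `|a k|) K *
      series (fun k => `|b k|) K - tri_sum (fun k => `|a k|) (fun k => `|b k|) K))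
      @ \oo --> 0.
    by rewrite -oppr0; apply: cvgN.
  apply: (squeeze_cvgr _ neg_gap_abs gap_abs).
  near=> K; rewrite -ler_norml series_cauchy_conv !series_mul_sub_tri.
  apply: (le_trans (ler_norm_sum _ _ _)); apply: ler_sum => k _.
  by rewrite normrM ler_wpM2l // ler_norm_sum.
have lim_eq := cvgB (cvgM ca cb) gap; rewrite subr0 in lim_eq.
suff -> : series (cauchy_conv a b) = fun K =>
  series a K * series b K - (series a K * series b K - series (cauchy_conv a b) K)
  by exact: lim_eq.
by apply/funext => K; rewrite subKr.
Unshelve. all: by end_near.
Qed.

End CauchyProduct.

Lemma mxpowSr (T : pzRingType) k (M : 'M[T]_k) m : M ^+ m.+1 = M ^+ m *m M.
Proof. by rewrite exprSr. Qed.

Lemma mxpowS (T : pzRingType) k (M : 'M[T]_k) m : M ^+ m.+1 = M *m M ^+ m.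
Proof. by rewrite exprS. Qed.

Lemma scalar_mxX (T : pzRingType) k (c : T) m : (c%:M : 'M[T]_k) ^+ m = (c ^+ m)%:M.
Proof.
elim: m => [|m IH]; first by rewrite !expr0.
by rewrite mxpowSr IH -scalar_mxM exprSr.
Qed.

Definition mx_moment (T : pzRingType) k (u : 'rV[T]_k) (M : 'M[T]_k)
    (v : 'cV[T]_k) (m : nat) : T :=
  (u *m M ^+ m *m v) 0 0.

Section MatrixExponential.
Variable R : realType.
Local Open Scope classical_set_scope.

(* The entrywise l1-norm of a square matrix: it bounds every entry of M^m
   by its m-th power, which makes all exponential series below converge. *)
Definition mx_abs_sum k (M : 'M[R]_k) : R := \sum_i \sum_j `|M i j|.

Lemma mx_abs_sum_ge0 k (M : 'M[R]_k) : 0 <= mx_abs_sum M.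
Proof. by apply: sumr_ge0 => i _; apply: sumr_ge0. Qed.

Lemma mxpow_entry_bound k (M : 'M[R]_k) m i j :
  `|(M ^+ m) i j| <= mx_abs_sum M ^+ m.
Proof.
elim: m i j => [|m IH] i j.
  by rewrite expr0 mxE; case: (i == j); rewrite ?normr1 ?normr0.
rewrite mxpowSr mxE exprSr.
apply: (le_trans (ler_norm_sum _ _ _)).
apply: (@le_trans _ _ (\sum_l mx_abs_sum M ^+ m * `|M l j|)).
  by apply: ler_sum => l _; rewrite normrM ler_wpM2r.
rewrite -big_distrr /= ler_wpM2l ?exprn_ge0 ?mx_abs_sum_ge0 //.
apply: ler_sum => l _; rewrite (bigD1 j) //= lerDl.
by apply: sumr_ge0.
Qed.

Lemma mx_moment_bound k (u : 'rV[R]_k) (M : 'M[R]_k) (v : 'cV[R]_k) m :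
  `|mx_moment u M v m| <=
    (\sum_j \sum_i `|u 0 i| * `|v j 0|) * mx_abs_sum M ^+ m.
Proof.
rewrite /mx_moment mxE big_distrl /=; apply: (le_trans (ler_norm_sum _ _ _)).
apply: ler_sum => j _; rewrite mxE big_distrl /= big_distrl /=.
apply: (le_trans (ler_norm_sum _ _ _)); apply: ler_sum => i _.
by rewrite !normrM mulrAC ler_wpM2l ?mulr_ge0 ?mxpow_entry_bound.
Qed.

(* A sequence with geometric growth, weighted by t^m/m!, is absolutely
   summable (comparison with the exponential series of |t| s). *)
Lemma exp_weighted_abs_cvg (x : nat -> R) (K s t : R) : 0 <= s ->
  (forall m, `|x m| <= K * s ^+ m) ->
  cvgn (series (fun m => `|exp_coeff t m * x m|)).
Proof.
move=> s_ge0 x_bound.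
have K_ge0 : 0 <= K.
  by have := x_bound 0%N; rewrite expr0 mulr1; apply: le_trans.
have cv := @is_cvg_seriesZ _ _ K (is_cvg_series_exp_coeff (`|t| * s)).
apply: (series_le_cvg _ _ _ cv) => m /=.
- by [].
- by rewrite mulr_ge0 // exp_coeff_ge0 // mulr_ge0.
rewrite /exp_coeff /= normrM normrM normfV normrX [`|(m`!)%:R|]ger0_norm //.
rewrite [X in _ <= X](_ : _ = K * ((`|t| * s) ^+ m / (m`!)%:R)) // exprMn.
rewrite (_ : K * _ = `|t| ^+ m / (m`!)%:R * (K * s ^+ m)); last by ring.
by rewrite ler_wpM2l // mulr_ge0 ?exprn_ge0 ?invr_ge0 ?ler0n.
Qed.

Lemma exp_moment_abs_cvg k (u : 'rV[R]_k) (M : 'M[R]_k) (v : 'cV[R]_k) t :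
  cvgn (series (fun m => `|exp_coeff t m * mx_moment u M v m|)).
Proof.
apply: (exp_weighted_abs_cvg (mx_abs_sum_ge0 M)).
exact: mx_moment_bound.
Qed.

Lemma exp_moment_cvg k (u : 'rV[R]_k) (M : 'M[R]_k) (v : 'cV[R]_k) t :
  cvgn (series (fun m => exp_coeff t m * mx_moment u M v m)).
Proof. exact/(@normed_cvg _ R^o)/exp_moment_abs_cvg. Qed.

Lemma mexp_moment k (u : 'rV[R]_k) (M : 'M[R]_k) (v : 'cV[R]_k) t :
  (u *m mexp M t *m v) 0 0 =
  limn (series (fun m => exp_coeff t m * mx_moment u M v m)).
Proof.
set e := fun i j => series (fun m => exp_coeff t m * (M ^+ m) i j).
have entry_cvg i j : e i j @ \oo --> mexp M t i j.
  rewrite /mexp mxE.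
  have -> : (fun N => (\sum_(m < N) (t ^+ m / (m`!)%:R *: M ^+ m)) i j) = e i j.
    apply/funext => N; rewrite summxE /e /series /= big_mkord.
    by apply: eq_bigr => m _; rewrite mxE.
  apply: (@normed_cvg _ R^o).
  apply: (@exp_weighted_abs_cvg _ 1 _ _ (mx_abs_sum_ge0 M)) => m.
  by rewrite mul1r mxpow_entry_bound.
have -> : series (fun m => exp_coeff t m * mx_moment u M v m) =
    (fun N => \sum_j \sum_i u 0 i * e i j N * v j 0).
  apply/funext => N; rewrite /e /series /mx_moment /=.
  under eq_bigr do rewrite mxE big_distrr /=.
  rewrite exchange_big /=; apply: eq_bigr => j _.
  under eq_bigr do rewrite mxE big_distrl /= big_distrr /=.
  rewrite exchange_big /=; apply: eq_bigr => i _.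
  by rewrite big_distrr /= big_distrl /=; apply: eq_bigr => m _; ring.
apply/esym/cvg_lim => //; rewrite mxE.
apply: cvg_big => [|j _]; first exact: add_continuous.
rewrite mxE big_distrl /=.
apply: cvg_big => [|i _]; first exact: add_continuous.
by apply: cvgMr_tmp; apply: cvgMl_tmp; exact: entry_cvg.
Qed.

Lemma mexp_moment_scale k l (u : 'rV[R]_k) (M : 'M[R]_k) (v : 'cV[R]_k)
    (u' : 'rV[R]_l) (M' : 'M[R]_l) (v' : 'cV[R]_l) (g t : R) :
  (forall m, mx_moment u M v m = g * mx_moment u' M' v' m) ->
  (u *m mexp M t *m v) 0 0 = g * (u' *m mexp M' t *m v') 0 0.
Proof.
move=> moment_eq; rewrite !mexp_moment; apply/cvg_lim => //.
have -> : series (fun m => exp_coeff t m * mx_moment u M v m) =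
    (fun N => g * series (fun m => exp_coeff t m * mx_moment u' M' v' m) N).
  apply/funext => N; rewrite /series /= big_distrr /=.
  by apply: eq_bigr => m _; rewrite moment_eq mulrCA.
by apply: cvgMl_tmp; exact: exp_moment_cvg.
Qed.

(* Binomial expansion of (M + c)^N, rearranged as the Cauchy product of
   the exponential series of c t with the moment series of M. *)
Lemma exp_moment_shift k (u : 'rV[R]_k) (M : 'M[R]_k) (v : 'cV[R]_k) c t N :
  exp_coeff t N * mx_moment u (M + c%:M) v N =
  cauchy_conv (exp_coeff (c * t)) (fun m => exp_coeff t m * mx_moment u M v m) N.
Proof.
rewrite /mx_moment exprDn_comm; last exact: scalar_mxC.
rewrite /cauchy_conv big_mkord mulmx_sumr mulmx_suml summxE big_distrr /=.
apply: eq_bigr => i _.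
rewrite scalar_mxX -mulmxE mul_mx_scalar -[_ *+ 'C(N, i)]scaler_nat.
rewrite -!scalemxAr -!scalemxAl !mxE.
have iN : (i <= N)%N by rewrite -ltnS ltn_ord.
rewrite /exp_coeff /= -(bin_fact iN) !natrM.
have -> : t ^+ N = t ^+ i * t ^+ (N - i) by rewrite -exprD subnKC.
have fact_neq0 j : (j`!)%:R != 0 :> R by rewrite pnatr_eq0 -lt0n fact_gt0.
have bin_neq0 : ('C(N, i))%:R != 0 :> R by rewrite pnatr_eq0 -lt0n bin_gt0.
by rewrite exprMn; field; rewrite !fact_neq0 bin_neq0.
Qed.

Lemma mexp_shift k (u : 'rV[R]_k) (M : 'M[R]_k) (v : 'cV[R]_k) c t :
  (u *m mexp (M + c%:M) t *m v) 0 0 = expR (c * t) * (u *m mexp M t *m v) 0 0.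
Proof.
have exp_abs_cvg : cvgn (series (fun m => `|exp_coeff (c * t) m|)).
  by have := is_cvg_series_exp_coeff `|c * t|; rewrite -normed_series_exp_coeff.
rewrite !mexp_moment.
under eq_fun do rewrite exp_moment_shift.
apply: cvg_lim => //; rewrite /expR.
exact: cauchy_product exp_abs_cvg (exp_moment_abs_cvg (u := u) (M := M) (v := v) (t := t)).
Qed.

End MatrixExponential.

Lemma max_pos_sub_neg (R : realDomainType) (a : R) :
  Num.max a 0 - Num.max (- a) 0 = a.
Proof. by case: (lerP 0 a) => h; case: (lerP 0 (- a)) => h'; lra. Qed.

Lemma max_pos_add_neg (R : realDomainType) (a : R) :
  Num.max a 0 + Num.max (- a) 0 = `|a|.
Proof.
case: (lerP 0 a) => h; [rewrite ger0_norm | rewrite ltr0_norm] => //;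
  by case: (lerP 0 (- a)) => h'; lra.
Qed.

Lemma sum_row_sub_scalar (T : pzRingType) k (M : 'M[T]_k) (c : T) i :
  \sum_j (M - c%:M) i j = \sum_j M i j - c.
Proof.
rewrite -[c in RHS](_ : \sum_j (c%:M : 'M[T]_k) i j = c).
  by rewrite -sumrB; apply: eq_bigr => j _; rewrite !mxE.
rewrite (bigD1 i) //= big1 ?addr0 => [|j ji]; first by rewrite mxE eqxx mulr1n.
by rewrite mxE eq_sym (negbTE ji) mulr0n.
Qed.

Section Construction.
Variable n : nat.
Local Notation N := n.+1.
Local Notation N2 := (n.+1).*2.

Lemma sum_pairs_nat (V : nmodType) (g : nat -> V) K :
  \sum_(0 <= p < K.*2) g p = \sum_(0 <= i < K) (g i.*2 + g i.*2.+1).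
Proof.
elim: K => [|K IH]; first by rewrite !big_geq.
by rewrite doubleS !big_nat_recr //= IH addrA.
Qed.

Lemma sum_pairs (V : nmodType) (f : 'I_N2 -> V) :
  \sum_p f p = \sum_(i < N) (f (inord i.*2) + f (inord i.*2.+1)).
Proof.
have sum_inord m (h : 'I_m.+1 -> V) :
    \sum_(p < m.+1) h p = \sum_(0 <= p < m.+1) h (inord p).
  by rewrite big_mkord; apply: eq_bigr => p _; rewrite inord_val.
rewrite (sum_inord n.*2.+1 f) -[(n.*2.+1).+1]/((n.+1).*2) sum_pairs_nat.
by rewrite sum_inord; apply: eq_big_nat => i /andP[_ iN]; rewrite inordK.
Qed.

Lemma val_inord_even (i : 'I_N) : ((inord i.*2 : 'I_N2) : nat) = i.*2.
Proof. by rewrite inordK // -doubleS ltn_double. Qed.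

Lemma val_inord_odd (i : 'I_N) : ((inord i.*2.+1 : 'I_N2) : nat) = i.*2.+1.
Proof. by rewrite inordK // -[X in (_ < X)%N]/((n.+1).*2) ltn_Sdouble. Qed.

Lemma half_double_odd k : (k.*2.+1)./2 = k.
Proof. by rewrite -[k.*2.+1]/((true + k.*2)%N) half_bit_double. Qed.

(* The folding matrix D, sending the pair (x_{2i}, x_{2i+1}) to
   x_{2i} - x_{2i+1}: it undoes the positive/negative splitting phi_1. *)
Definition fold_mx : 'M[rat]_(N, N2) :=
  \matrix_(i, p) (if (p : nat)./2 == (i : nat) then (if odd p then -1 else 1) else 0).

Lemma fold_mx_sum (f : 'I_N2 -> rat) (i : 'I_N) :
  \sum_p fold_mx i p * f p = f (inord i.*2) - f (inord i.*2.+1).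
Proof.
have fold_even (j : 'I_N) : fold_mx i (inord j.*2) = (j == i)%:R.
  rewrite mxE val_inord_even doubleK odd_double /=.
  by case: ifP => h; rewrite -[j == i]/(val j == val i) h.
have fold_odd (j : 'I_N) : fold_mx i (inord j.*2.+1) = - (j == i)%:R.
  rewrite mxE val_inord_odd half_double_odd /= odd_double /=.
  by case: ifP => h; rewrite -[j == i]/(val j == val i) h ?oppr0.
rewrite sum_pairs; under eq_bigr do rewrite fold_even fold_odd.
rewrite (bigD1 i) //= big1 ?addr0; last first.
  by move=> j /negbTE ->; rewrite mul0r oppr0 mul0r addr0.
by rewrite eqxx mul1r mulN1r.
Qed.

Lemma sum_fold_mx (A : 'M[rat]_N) (i : 'I_N) (q : 'I_N2) :
  \sum_j A i j * fold_mx j q = A i (inord (q : nat)./2) * (if odd q then -1 else 1).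
Proof.
rewrite (bigD1 (inord (q : nat)./2)) //= big1 ?addr0.
  by rewrite mxE inordK ?ltn_half_double // eqxx.
move=> j hj; rewrite mxE; case: eqP => [E|]; last by rewrite mulr0.
by move: hj; rewrite E inord_val eqxx.
Qed.

Lemma fold_phi1 (A : 'M[rat]_N) : fold_mx *m phi1 A = A *m fold_mx.
Proof.
apply/matrixP => i q; rewrite !mxE fold_mx_sum sum_fold_mx !mxE.
rewrite val_inord_even val_inord_odd doubleK half_double_odd odd_double /= odd_double /=.
rewrite inord_val; have := max_pos_sub_neg (A i (inord (q : nat)./2)).
by case: (odd q) => /= h; lra.
Qed.

Lemma fold_phi2 (X0 : 'cV[rat]_N) : fold_mx *m Y2 X0 = X0.
Proof.
apply/matrixP => i z; rewrite mxE fold_mx_sum !mxE val_inord_even val_inord_odd.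
by rewrite doubleK odd_double /= odd_double /= subr0 inord_val [z]ord1.
Qed.

(* beta has equal entries on each block, so folding kills it. *)
Lemma fold_betav (A : 'M[rat]_N) (X0 : 'cV[rat]_N) : fold_mx *m betav A X0 = 0.
Proof.
apply/matrixP => i z; rewrite mxE fold_mx_sum !mxE val_inord_even val_inord_odd.
by rewrite doubleK half_double_odd subrr.
Qed.

Lemma fold_P2 (A : 'M[rat]_N) : fold_mx *m P2 A = (A - (lam A)%:M) *m fold_mx.
Proof.
by rewrite /P2 mulmxBr fold_phi1 mulmxBl mul_mx_scalar mul_scalar_mx.
Qed.

Lemma fold_P2X (A : 'M[rat]_N) m :
  fold_mx *m P2 A ^+ m = (A - (lam A)%:M) ^+ m *m fold_mx.
Proof.
elim: m => [|m IH]; first by rewrite !expr0 mulmx1 mul1mx.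
by rewrite !mxpowSr mulmxA IH -mulmxA fold_P2 mulmxA.
Qed.

Lemma fold_wv (A : 'M[rat]_N) (X0 : 'cV[rat]_N) :
  fold_mx *m wv A X0 = (A - (lam A)%:M) *m X0.
Proof.
by rewrite /wv mulmxDr mulmxA fold_P2 -mulmxA fold_phi2 fold_betav addr0.
Qed.

(* P acts on the last coordinate by injecting w / gamma, then runs P2. *)
Lemma Pmat_pow_Y0 (A : 'M[rat]_N) (X0 : 'cV[rat]_N) m :
  Pmat A X0 ^+ m.+1 *m Y0vec n =
  col_mx (P2 A ^+ m *m ((gam A X0)^-1 *: wv A X0)) 0.
Proof.
elim: m => [|m IH].
  rewrite expr1 expr0 mul1mx /Pmat /Y0vec mul_block_col.
  by rewrite !mulmx0 mulmx1 mul0mx !add0r.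
rewrite mxpowS -mulmxA IH /Pmat mul_block_col !mulmx0 !addr0 mul0mx.
by rewrite mulmxA -mxpowS.
Qed.

Lemma Cvec_mul (x : 'cV[rat]_N) : (Cvec n *m x) 0 0 = x ord0 0.
Proof.
rewrite mxE (bigD1 ord0) //= big1 ?addr0; first by rewrite mxE eqxx mul1r.
by move=> j hj; rewrite mxE (negbTE hj) mul0r.
Qed.

Lemma Cpvec_col (x : 'cV[rat]_N2) (y : 'cV[rat]_1) :
  (Cpvec n *m col_mx x y) 0 0 = (Cvec n *m (fold_mx *m x)) 0 0.
Proof.
rewrite Cvec_mul !mxE big_split_ord /= [X in _ + X]big1 ?addr0; last first.
  by move=> j _; rewrite !mxE /= subrr mul0r.
apply: eq_bigr => p _; rewrite col_mxEu !mxE; congr (_ * _).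
by case: p => [[|[|p]] hp].
Qed.

Lemma Pmat_moment (A : 'M[rat]_N) (X0 : 'cV[rat]_N) m :
  X0 ord0 0 = 0 -> gam A X0 != 0 ->
  mx_moment (Cvec n) (A - (lam A)%:M) X0 m =
  gam A X0 * mx_moment (Cpvec n) (Pmat A X0) (Y0vec n) m.
Proof.
rewrite /mx_moment => X0_0 gam_neq0; case: m => [|m].
  by rewrite !expr0 !mulmx1 Cvec_mul X0_0 /Y0vec Cpvec_col !mulmx0 mxE mulr0.
rewrite -[in RHS]mulmxA Pmat_pow_Y0 Cpvec_col.
rewrite [fold_mx *m _]mulmxA fold_P2X -mulmxA -scalemxAr -mulmxA fold_wv.
rewrite [_ ^+ m *m _]mulmxA -mxpowSr -scalemxAr.
by rewrite [in RHS]mxE mulrA mulfV // mul1r.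
Qed.

(* Each entry of P2 Y2 + beta is nonnegative: beta dominates the negative
   parts of both entries of its block. *)
Lemma wv_ge0 (A : 'M[rat]_N) (X0 : 'cV[rat]_N) p : 0 <= wv A X0 p 0.
Proof.
rewrite /wv mxE [betav _ _ _ _]mxE; move: (P2 A *m Y2 X0) => v.
set b := Num.max (- v (inord ((p : nat)./2).*2) 0)
                 (- v (inord ((p : nat)./2).*2.+1) 0).
suff neg_le : - v p 0 <= b.
  have : - v p 0 <= Num.max 0 b by rewrite le_max neg_le orbT.
  lra.
have p_eq : (p : nat) = (((p : nat)./2).*2 + odd p)%N.
  by rewrite addnC odd_double_half.
rewrite /b le_max; apply/orP.
case: (odd p) p_eq => /=; rewrite ?addn1 ?addn0 => p_eq; [right|left];
  rewrite (_ : inord _ = p) //; apply: val_inj; by rewrite /= inordK -p_eq ?ltn_ord.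
Qed.

Lemma phi1_ge0 (A : 'M[rat]_N) p q : 0 <= phi1 A p q.
Proof. by rewrite mxE /=; case: (_ == _); rewrite le_max lexx orbT. Qed.

Lemma phi1_row_sum (A : 'M[rat]_N) (p : 'I_N2) :
  \sum_q phi1 A p q = \sum_l `|A (inord ((p : nat)./2)) l|.
Proof.
rewrite sum_pairs; apply: eq_bigr => l _.
rewrite !mxE val_inord_even val_inord_odd doubleK half_double_odd /=.
rewrite odd_double /= inord_val.
by case: (odd p) => /=; rewrite ?max_pos_add_neg // addrC max_pos_add_neg.
Qed.

(* Off the diagonal, P has entries of phi_1(A), of (P2 Y2 + beta) / gamma,
   or zeros: all nonnegative. *)
Lemma Pmat_offdiag_ge0 (A : 'M[rat]_N) (X0 : 'cV[rat]_N) (i j : 'I_(N2 + 1)) :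
  0 < gam A X0 -> i != j -> 0 <= Pmat A X0 i j.
Proof.
move=> gam_gt0; rewrite /Pmat.
case: (split_ordP i) => i' ->; case: (split_ordP j) => j' -> ij.
- move: ij; rewrite eq_lshift => /negbTE ij.
  rewrite block_mxEul /P2 mxE [X in _ + X]mxE [X in _ - X]mxE ij mulr0n subr0.
  exact: phi1_ge0.
- rewrite block_mxEur mxE [j']ord1.
  by apply: mulr_ge0; [rewrite invr_ge0 ltW | exact: wv_ge0].
- by rewrite block_mxEdl mxE.
- by rewrite block_mxEdr mxE.
Qed.

(* The rows of P sum to at most 0: in the P2 block the diagonal shift
   lambda exceeds the absolute row sum of A by 1, which pays for the
   last column w / gamma, whose entries are at most 1. *)
Lemma Pmat_row_sum_le0 (A : 'M[rat]_N) (X0 : 'cV[rat]_N) (i : 'I_(N2 + 1)) :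
  0 < gam A X0 -> \sum_j Pmat A X0 i j <= 0.
Proof.
move=> gam_gt0; rewrite /Pmat big_split_ord /=; case: (split_ordP i) => i' ->.
  rewrite big_ord1 block_mxEur mxE.
  under eq_bigr do rewrite block_mxEul.
  rewrite /P2 sum_row_sub_scalar phi1_row_sum.
  have row_le : \sum_l `|A (inord ((i' : nat)./2)) l| <= lam A - 1.
    by rewrite /lam addrK; apply: le_bigmax.
  have w_le : (gam A X0)^-1 * wv A X0 i' 0 <= 1.
    by rewrite mulrC ler_pdivrMr // mul1r /gam; apply: le_bigmax.
  lra.
under eq_bigr do rewrite block_mxEdl mxE.
under [X in _ + X]eq_bigr do rewrite block_mxEdr mxE.
by rewrite !big1 ?addr0.
Qed.

End Construction.

Lemma mx_moment_ratr (R : realType) k (u : 'rV[rat]_k) (M : 'M[rat]_k)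
    (v : 'cV[rat]_k) m :
  mx_moment (map_mx (@ratr R) u) (map_mx ratr M) (map_mx ratr v) m =
  ratr (mx_moment u M v m).
Proof.
have map_mxX j : map_mx (@ratr R) M ^+ j = map_mx ratr (M ^+ j).
  elim: j => [|j IH]; first by rewrite !expr0 map_mx1.
  by rewrite !mxpowSr IH map_mxM.
by rewrite /mx_moment map_mxX -!map_mxM mxE.
Qed.

Theorem mainTheorem5 (R : realType) (n : nat)
  (A : 'M[rat]_n.+1) (X0 : 'cV[rat]_n.+1)
  (hX0 : X0 ord0 0 = 0) (hgam : 0 < gam A X0) :
  (forall t : R,
     (map_mx ratr (Cvec n) *m mexp (map_mx ratr A) t *m map_mx ratr X0) 0 0
     = ratr (gam A X0) * expR (ratr (lam A) * t)
       * (map_mx ratr (Cpvec n) *m mexp (map_mx ratr (Pmat A X0)) t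
            *m map_mx ratr (Y0vec n)) 0 0)
  /\ (forall i j, i != j -> 0 <= Pmat A X0 i j)
  /\ (forall i, \sum_j Pmat A X0 i j <= 0).
Proof.
split; last first.
  split=> [i j|i]; [exact: Pmat_offdiag_ge0 | exact: Pmat_row_sum_le0].
move=> t.
(* e^{At} = e^{lambda t} e^{(A - lambda) t}, and the moments of A - lambda
   are gamma times those of P. *)
have -> : map_mx (@ratr R) A = map_mx ratr (A - (lam A)%:M) + (ratr (lam A))%:M.
  by rewrite map_mxB map_scalar_mx subrK.
rewrite mexp_shift (mexp_moment_scale (g := ratr (gam A X0))
  (u' := map_mx ratr (Cpvec n)) (M' := map_mx ratr (Pmat A X0))
  (v' := map_mx ratr (Y0vec n))); first by rewrite mulrCA mulrA.
move=> m; rewrite !mx_moment_ratr -rmorphM /=.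
by rewrite Pmat_moment ?gt_eqF.
Qed.
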